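(* Let $(\mathscr C,A,\psi)$ be an entwining structure and let $S_\psi: {_A^{\mathscr C}}Ctr(\psi)\longrightarrow {^\mathscr C}Ctr$ be the forgetful functor. Then $(S_\psi,T_\psi)$ is a pair of adjoint functors, i.e. ${^\mathscr C}Ctr(S_\psi(\mathcal M),\mathcal N)\cong {_A^{\mathscr C}}Ctr(\psi)(\mathcal M,T_\psi(\mathcal N))$ naturally in $\mathcal M\in{_A^{\mathscr C}}Ctr(\psi)$, $\mathcal N\in{^\mathscr C}Ctr$.
   Context: $K$ is a field, $(U',U):=Hom_K(U',U)$. $\mathscr C$ is a coalgebra with several objects (objects $Ob(\mathscr C)$, vector spaces $\mathscr C(X,Y)$, coassociative counital maps $\delta_{XYZ}:\mathscr C(X,Z)\to\mathscr C(Y,Z)\otimes\mathscr C(X,Y)$, $f\mapsto f_{Y1}\otimes f_{Y2}$, and $\epsilon_X:\mathscr C(X,X)\to K$). $A$ is a $K$-algebra and $\psi=\{\psi_{XY}:\mathscr C(X,Y)\otimes A\to A\otimes\mathscr C(X,Y)\}$, written $\psi(f\otimes a)=a_\psi\otimes f^\psi$, is an entwining: $a_\psi\otimes\delta_{XYZ}(f^\psi)=a_{\psi\psi}\otimes f_{Y1}^\psi\otimes f_{Y2}^\psi$, $(ab)_\psi\otimes f^\psi=a_\psi b_\psi\otimes f^{\psi\psi}$, $\psi(f\otimes1)=1\otimes f$, $a_\psi\epsilon_Z(g^\psi)=\epsilon_Z(g)a$. ${^\mathscr C}Ctr$ is the category of left $\mathscr C$-contramodules $(\mathcal M,\pi)$: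 vector spaces $\mathcal M(X)$ with maps $\pi_{XY}:(\mathscr C(X,Y),\mathcal M(Y))\to\mathcal M(X)$ satisfying $\pi_{XZ}\circ(\delta_{XYZ},\mathcal M(Z))=\pi_{XY}\circ(\mathscr C(X,Y),\pi_{YZ})$ and $\pi_{XX}\circ(\epsilon_X,\mathcal M(X))=id$. An entwined contramodule is a contramodule $(\mathcal M,\pi)$ with left $A$-module structures $\mu_X:\mathcal M(X)\to(A,\mathcal M(X))$ such that $\mu_X\circ\pi_{XY}=(A,\pi_{XY})\circ(\psi_{XY},\mathcal M(Y))\circ(\mathscr C(X,Y),\mu_Y)$ (using $(\mathscr C(X,Y),(A,\mathcal M(Y)))\cong(A\otimes\mathscr C(X,Y),\mathcal M(Y))$ and $(\mathscr C(X,Y)\otimes A,\mathcal M(Y))\cong(A,(\mathscr C(X,Y),\mathcal M(Y)))$); morphisms are contramodule morphisms that are objectwise $A$-linear; the category is ${_A^{\mathscr C}}Ctr(\psi)$. The functor $T_\psi:{^\mathscr C}Ctr\to{_A^{\mathscr C}}Ctr(\psi)$ sends $\mathcal M$ to $T_\psi(\mathcal M)(X):=(A,\mathcal M(X))$ with $A$-action induced by multiplication of $A$ and contramodule structure $(\mathscr C(X,Y),A,\mathcal M(Y))\xrightarrow{(\psi_{XY},\mathcal M(Y))}(A,\mathscr C(X,Y),\mathcal M(Y))\xrightarrow{(A,\pi_{XY})}(A,\mathcal M(X))$. *)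

From HB Require Import structures.
From mathcomp Require Import all_boot all_order all_algebra.
From mathcomp Require Import boolp.
Set Implicit Arguments. Unset Strict Implicit. Unset Printing Implicit Defensive.
Import GRing.Theory.
Local Open Scope ring_scope.

Section Linmap.
Variables (K : fieldType).

Definition islin (U V : lmodType K) (f : U -> V) :=
  forall (a : K) (x y : U), f (a *: x + y) = a *: f x + f y.

Record linmap (U V : lmodType K) := Linmap { lfun :> U -> V; lfunP : islin lfun }.

Variables (U V : lmodType K).

HB.instance Definition _ := gen_eqMixin (linmap U V).
HB.instance Definition _ := gen_choiceMixin (linmap U V).

Lemma linmap_ext (f g : linmap U V) : (forall x, f x = g x) -> f = g.
Proof.
case: f g => f fP [g gP] /= efg.
have e : f = g by apply: funext.
subst g; congr Linmap; exact: Prop_irrelevance.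
Qed.

Lemma lin0_subproof : islin (fun _ : U => (0 : V)).
Proof. by move=> a x y; rewrite scaler0 addr0. Qed.
Definition lin0 := Linmap lin0_subproof.

Lemma linopp_subproof (f : linmap U V) : islin (fun x => - f x).
Proof. by move=> a x y; rewrite lfunP opprD scalerN. Qed.
Definition linopp f := Linmap (linopp_subproof f).

Lemma linadd_subproof (f g : linmap U V) : islin (fun x => f x + g x).
Proof.
move=> a x y; rewrite !lfunP scalerDr.
by rewrite -!addrA; congr (_ + _); rewrite addrCA.
Qed.
Definition linadd f g := Linmap (linadd_subproof f g).

Lemma linscale_subproof (k : K) (f : linmap U V) : islin (fun x => k *: f x).
Proof. by move=> a x y; rewrite lfunP scalerDr !scalerA mulrC. Qed.
Definition linscale k f := Linmap (linscale_subproof k f).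

Lemma linaddA : associative linadd.
Proof. by move=> f g h; apply: linmap_ext => x /=; rewrite addrA. Qed.
Lemma linaddC : commutative linadd.
Proof. by move=> f g; apply: linmap_ext => x /=; rewrite addrC. Qed.
Lemma linadd0 : left_id lin0 linadd.
Proof. by move=> f; apply: linmap_ext => x /=; rewrite add0r. Qed.
Lemma linaddN : left_inverse lin0 linopp linadd.
Proof. by move=> f; apply: linmap_ext => x /=; rewrite addNr. Qed.

HB.instance Definition _ :=
  GRing.isZmodule.Build (linmap U V) linaddA linaddC linadd0 linaddN.

Lemma linscaleA a b (f : linmap U V) : linscale a (linscale b f) = linscale (a * b) f.
Proof. by apply: linmap_ext => x /=; rewrite scalerA. Qed.
Lemma linscale1 : left_id 1 linscale.
Proof. by move=> f; apply: linmap_ext => x /=; rewrite scale1r. Qed.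
Lemma linscaleDr : right_distributive linscale +%R.
Proof. by move=> a f g; apply: linmap_ext => x /=; rewrite scalerDr. Qed.
Lemma linscaleDl (f : linmap U V) : {morph linscale^~ f : a b / a + b}.
Proof. by move=> a b; apply: linmap_ext => x /=; rewrite scalerDl. Qed.

HB.instance Definition _ :=
  GRing.Zmodule_isLmodule.Build K (linmap U V) linscaleA linscale1 linscaleDr linscaleDl.

Lemma linmap_addE (f g : linmap U V) x : (f + g) x = f x + g x. Proof. by []. Qed.
Lemma linmap_scaleE a (f : linmap U V) x : (a *: f) x = a *: f x. Proof. by []. Qed.

End Linmap.

Arguments linmap_ext {K U V f g}.

(* Tensors.  An element of U (x) V is represented by a finite list of   *)
(* pure tensors [:: (u_1,v_1); ...] standing for sum_i u_i (x) v_i;     *)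
(* all axioms are stated by evaluating such lists against arbitrary     *)
(* (multi)linear maps (universal property of the tensor product), so    *)
(* they only depend on the element of U (x) V that the list represents. *)
Section Tensor.
Variable K : fieldType.

Definition tev (U V W : lmodType K) (b : U -> V -> W) (s : seq (U * V)) : W :=
  \sum_(p <- s) b p.1 p.2.

Definition bilin (U V W : lmodType K) (b : U -> V -> W) :=
  (forall v, islin (fun u => b u v)) /\ (forall u, islin (b u)).

Definition trilin (U V U' W : lmodType K) (t : U -> V -> U' -> W) :=
  [/\ forall v w, islin (fun u => t u v w),
      forall u w, islin (fun v => t u v w) &
      forall u v, islin (t u v)].

End Tensor.

Record coalgebra (K : fieldType) (Ob : Type) := Coalgebra {
  cC : Ob -> Ob -> lmodType K;
  cdelta : forall X Y Z, cC X Z -> seq (cC Y Z * cC X Y);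
  ceps : forall X, cC X X -> K;
  cdelta_lin : forall X Y Z (W : lmodType K) (b : cC Y Z -> cC X Y -> W),
      bilin b -> islin (fun f => tev b (@cdelta X Y Z f));
  ceps_lin : forall X (a : K) (f g : cC X X),
      @ceps X (a *: f + g) = a * @ceps X f + @ceps X g;
  ccoassoc : forall X Y Y' Z (W : lmodType K)
      (t : cC Y' Z -> cC Y Y' -> cC X Y -> W), trilin t -> forall f : cC X Z,
      \sum_(p <- @cdelta X Y Z f) \sum_(q <- @cdelta Y Y' Z p.1) t q.1 q.2 p.2
    = \sum_(p <- @cdelta X Y' Z f) \sum_(q <- @cdelta X Y Y' p.2) t p.1 q.1 q.2;
  ccounitl : forall X Y (f : cC X Y),
      \sum_(p <- @cdelta X Y Y f) @ceps Y p.1 *: p.2 = f;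
  ccounitr : forall X Y (f : cC X Y),
      \sum_(p <- @cdelta X X Y f) @ceps X p.2 *: p.1 = f }.

Record entwining (K : fieldType) (Ob : Type) (CC : coalgebra K Ob)
    (A : algType K) := Entwining {
  epsi : forall X Y, cC CC X Y -> A -> seq (A * cC CC X Y);
  epsi_lin : forall X Y (W : lmodType K) (b : A -> cC CC X Y -> W),
      bilin b -> bilin (fun f a => tev b (@epsi X Y f a));
  epsi_delta : forall X Y Z (W : lmodType K)
      (t : A -> cC CC Y Z -> cC CC X Y -> W), trilin t ->
      forall (f : cC CC X Z) (a : A),
      \sum_(p <- @epsi X Z f a) \sum_(q <- @cdelta _ _ CC X Y Z p.2) t p.1 q.1 q.2
    = \sum_(p <- @cdelta _ _ CC X Y Z f) \sum_(q <- @epsi X Y p.2 a)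
        \sum_(r <- @epsi Y Z p.1 q.1) t r.1 r.2 q.2;
  epsi_mul : forall X Y (W : lmodType K) (b : A -> cC CC X Y -> W), bilin b ->
      forall (f : cC CC X Y) (a a' : A),
      tev b (@epsi X Y f (a * a'))
    = \sum_(p <- @epsi X Y f a) \sum_(q <- @epsi X Y p.2 a') b (p.1 * q.1) q.2;
  epsi_one : forall X Y (W : lmodType K) (b : A -> cC CC X Y -> W), bilin b ->
      forall f : cC CC X Y, tev b (@epsi X Y f 1) = b 1 f;
  epsi_eps : forall X (g : cC CC X X) (a : A),
      \sum_(p <- @epsi X X g a) @ceps _ _ CC X p.2 *: p.1 = @ceps _ _ CC X g *: a }.

Section HomOps.
Variable K : fieldType.

Lemma lcomp_subproof (U V W : lmodType K) (p : linmap V W) (g : linmap U V) :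
  islin (fun x => p (g x)).
Proof. by move=> a x y; rewrite !lfunP. Qed.
Definition lcomp U V W p g := Linmap (@lcomp_subproof U V W p g).

Lemma sum_lin (I : Type) (s : seq I) (W : lmodType K) (a : K) (x y : I -> W) :
  \sum_(i <- s) (a *: x i + y i) = a *: \sum_(i <- s) x i + \sum_(i <- s) y i.
Proof. by rewrite big_split /= scaler_sumr. Qed.

End HomOps.

Section Contramodules.
Variables (K : fieldType) (Ob : Type) (CC : coalgebra K Ob) (A : algType K)
          (E : entwining CC A).
Local Notation C := (cC CC).

Record cdata := CData {
  cM : Ob -> lmodType K;
  cpi : forall X Y, linmap (linmap (C X Y) (cM Y)) (cM X) }.

(* (delta_XYZ, W) composed with (C(X,Y),(C(Y,Z),W)) ~= (C(Y,Z) (x) C(X,Y), W) *)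
Lemma dual_delta_bilin X Y Z (W : lmodType K) (g : linmap (C X Y) (linmap (C Y Z) W)) :
  bilin (fun h f => g f h).
Proof.
split=> [f|h] a x y /=; first by rewrite lfunP.
by rewrite lfunP.
Qed.
Definition dual_delta X Y Z W g :=
  Linmap (cdelta_lin (@dual_delta_bilin X Y Z W g)).

(* (eps_X, W) : W = (K, W) -> (C(X,X), W) *)
Lemma eps_map_subproof X (W : lmodType K) (m : W) : islin (fun f : C X X => ceps f *: m).
Proof. by move=> a f g; rewrite ceps_lin scalerDl scalerA. Qed.
Definition eps_map X W m := Linmap (@eps_map_subproof X W m).

Definition is_contra (N : cdata) : Prop :=
  (forall X Y Z (g : linmap (C X Y) (linmap (C Y Z) (cM N Z))),
      cpi N X Z (dual_delta g) = cpi N X Y (lcomp (cpi N Y Z) g)) /\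
  (forall X (m : cM N X), cpi N X X (eps_map X m) = m).

Record cmor (M N : cdata) := CMor {
  cmap :> forall X, linmap (cM M X) (cM N X);
  cmapP : forall X Y (phi : linmap (C X Y) (cM M Y)),
      cmap X (cpi M X Y phi) = cpi N X Y (lcomp (cmap Y) phi) }.

Record contramodule := Contramodule { ctr :> cdata; ctrP : is_contra ctr }.

Lemma cmor_comp_subproof (M N N' : cdata) (v : cmor N N') (h : cmor M N) X Y
    (phi : linmap (C X Y) (cM M Y)) :
  lcomp (v X) (h X) (cpi M X Y phi)
  = cpi N' X Y (lcomp (lcomp (v Y) (h Y)) phi).
Proof.
rewrite /= cmapP cmapP; congr (cpi _ _ _ _); exact: linmap_ext.
Qed.
Definition cmor_comp M N N' v h :=
  CMor (@cmor_comp_subproof M N N' v h).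

(* psi-twist: for Phi : (C(X,Y),(A,W)) and b in A, the map
   f |-> Phi(f^psi)(b_psi) *)
Lemma tw_bilin X Y (W : lmodType K) (Phi : linmap (C X Y) (linmap A W)) :
  bilin (fun (a : A) f => Phi f a).
Proof. by split=> [f|a] k x y /=; rewrite lfunP. Qed.
Definition tw X Y W Phi (b : A) : linmap (C X Y) W :=
  Linmap ((epsi_lin E (@tw_bilin X Y W Phi)).1 b).

(* raw data of an entwined contramodule: a contramodule with
   mu_X : M(X) -> (A, M(X)),  mu_X m a = a . m *)
Record edata := EData {
  ed :> cdata;
  emu : forall X, linmap (cM ed X) (linmap A (cM ed X)) }.

Definition is_entwined (M : edata) : Prop :=
  [/\ is_contra M,
      (forall X (m : cM M X), emu M X m 1 = m),
      (forall X (a b : A) (m : cM M X), emu M X m (a * b) = emu M X (emu M X m b) a) &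
      (forall X Y (phi : linmap (C X Y) (cM M Y)) (a : A),
          emu M X (cpi M X Y phi) a = cpi M X Y (tw (lcomp (emu M Y) phi) a))].

Record emor (M N : edata) := EMor {
  emap :> cmor M N;
  emapP : forall X (m : cM M X) (a : A), emap X (emu M X m a) = emu N X (emap X m) a }.

Record entcontra := Entcontra { ectr :> edata; ectrP : is_entwined ectr }.

Section Tpsi.
Variable N : cdata.

Lemma Tpi_in_subproof X Y (Phi : linmap (C X Y) (linmap A (cM N Y))) :
  islin (fun b : A => cpi N X Y (tw Phi b)).
Proof.
move=> k b b'; rewrite -lfunP; congr (cpi _ _ _ _).
by apply: linmap_ext => f /=; rewrite ((epsi_lin E (tw_bilin Phi)).2 f).
Qed.
Definition Tpi_in X Y Phi : linmap A (cM N X) := Linmap (@Tpi_in_subproof X Y Phi).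

Lemma Tpi_subproof X Y : islin (@Tpi_in X Y).
Proof.
move=> k P Q; apply: linmap_ext => b /=; rewrite -lfunP; congr (cpi _ _ _ _).
by apply: linmap_ext => f /=; rewrite /tev -sum_lin.
Qed.
(* (A, pi_XY) o (psi_XY, N(Y)) *)
Definition Tpi X Y := Linmap (@Tpi_subproof X Y).

Lemma Tmu_in2_subproof X (g : linmap A (cM N X)) (a : A) :
  islin (fun b : A => g (b * a)).
Proof. by move=> k x y; rewrite mulrDl -scalerAl lfunP. Qed.
Lemma Tmu_in_subproof X (g : linmap A (cM N X)) :
  islin (fun a : A => Linmap (Tmu_in2_subproof g a)).
Proof.
move=> k x y; apply: linmap_ext => b /=.
by rewrite mulrDr -scalerAr lfunP.
Qed.
Lemma Tmu_subproof X :
  islin (fun g : linmap A (cM N X) => Linmap (Tmu_in_subproof g)).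
Proof. by move=> k g h; apply: linmap_ext => a; apply: linmap_ext => b. Qed.
Definition Tmu X := Linmap (@Tmu_subproof X).

Definition Tpsi : edata := EData (@Tmu : forall X, linmap (cM (CData Tpi) X) _).

End Tpsi.

End Contramodules.

From Pilot Require Import Defs.
From mathcomp Require Import all_boot all_order all_algebra.
Set Implicit Arguments. Unset Strict Implicit. Unset Printing Implicit Defensive.
Import GRing.Theory.
Local Open Scope ring_scope.

(* The bijection sends a contramodule map h : S M -> N to
   m |-> (a |-> h (a . m)); its inverse evaluates k : M -> T N at 1.
   The first map is a contramodule map because the action of A on M is
   entwined with pi exactly as the structure map of T N twists by psi; the
   second one because psi (f (x) 1) = 1 (x) f.  The two are mutually inverse
   by 1 . m = m and by A-linearity of k, and naturality is A-linearity of u. *)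

Section LinmapFacts.
Variables (K : fieldType) (U V : lmodType K).
Implicit Type f : linmap U V.

Lemma linmapD f x y : f (x + y) = f x + f y.
Proof. by have := Defs.lfunP f 1 x y; rewrite !scale1r. Qed.

Lemma linmap0 f : f 0 = 0.
Proof. by apply: (@addrI _ (f 0)); rewrite -linmapD !addr0. Qed.

Lemma linmap_sum f (I : Type) (s : seq I) (F : I -> U) :
  f (\sum_(i <- s) F i) = \sum_(i <- s) f (F i).
Proof.
elim: s => [|x s IHs]; first by rewrite !big_nil linmap0.
by rewrite !big_cons linmapD IHs.
Qed.

End LinmapFacts.

Section Adjunction.
Variables (K : fieldType) (Ob : Type) (CC : coalgebra K Ob)
  (A : algType K) (E : entwining CC A).

Lemma tw1 X Y (W : lmodType K) (Phi : linmap (cC CC X Y) (linmap A W)) f :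
  tw E Phi 1 f = Phi f 1.
Proof. exact: (epsi_one E (tw_bilin Phi)). Qed.

Section EntwinedFacts.
Variable M : entcontra E.

Lemma emu1 X (m : cM M X) : emu M X m 1 = m.
Proof. by case: (ectrP M). Qed.

Lemma emuM X (a b : A) (m : cM M X) : emu M X m (a * b) = emu M X (emu M X m b) a.
Proof. by case: (ectrP M). Qed.

Lemma emu_cpi X Y (phi : linmap (cC CC X Y) (cM M Y)) a :
  emu M X (cpi M X Y phi) a = cpi M X Y (tw E (lcomp (emu M Y) phi) a).
Proof. by case: (ectrP M). Qed.

End EntwinedFacts.

Section ToTpsi.
Variables (M : entcontra E) (N : cdata CC) (h : cmor M N).

Lemma to_Tpsi_fun_subproof X (m : cM M X) : islin (fun a => h X (emu M X m a)).
Proof. by move=> k a b; rewrite !Defs.lfunP. Qed.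
Definition to_Tpsi_fun X m : linmap A (cM N X) := Linmap (to_Tpsi_fun_subproof m).

Lemma to_Tpsi_lin_subproof X : islin (@to_Tpsi_fun X).
Proof. by move=> k m m'; apply: linmap_ext => a /=; rewrite !Defs.lfunP. Qed.
Definition to_Tpsi_lin X : linmap (cM M X) (cM (Tpsi E N) X) :=
  Linmap (@to_Tpsi_lin_subproof X).

Lemma to_Tpsi_cmorP X Y (phi : linmap (cC CC X Y) (cM M Y)) :
  to_Tpsi_lin X (cpi M X Y phi) = cpi (Tpsi E N) X Y (lcomp (to_Tpsi_lin Y) phi).
Proof.
apply: linmap_ext => a /=; rewrite emu_cpi cmapP; congr (cpi _ _ _ _).
by apply: linmap_ext => f /=; rewrite /tev linmap_sum.
Qed.
Definition to_Tpsi_cmor : cmor M (Tpsi E N) := CMor to_Tpsi_cmorP.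

Lemma to_Tpsi_emorP X (m : cM M X) a :
  to_Tpsi_cmor X (emu M X m a) = emu (Tpsi E N) X (to_Tpsi_cmor X m) a.
Proof. by apply: linmap_ext => b /=; rewrite emuM. Qed.
Definition to_Tpsi : emor M (Tpsi E N) := EMor to_Tpsi_emorP.

End ToTpsi.

Section FromTpsi.
Variables (M : entcontra E) (N : cdata CC) (k : emor M (Tpsi E N)).

Lemma from_Tpsi_lin_subproof X : islin (fun m : cM M X => k X m 1).
Proof. by move=> c m m'; rewrite Defs.lfunP. Qed.
Definition from_Tpsi_lin X : linmap (cM M X) (cM N X) :=
  Linmap (@from_Tpsi_lin_subproof X).

Lemma from_Tpsi_cmorP X Y (phi : linmap (cC CC X Y) (cM M Y)) :
  from_Tpsi_lin X (cpi M X Y phi) = cpi N X Y (lcomp (from_Tpsi_lin Y) phi).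
Proof.
rewrite /= cmapP /=; congr (cpi _ _ _ _).
by apply: linmap_ext => f; rewrite tw1.
Qed.
Definition from_Tpsi : cmor M N := CMor from_Tpsi_cmorP.

End FromTpsi.

Lemma from_to_Tpsi (M : entcontra E) (N : cdata CC) (h : cmor M N) X m :
  from_Tpsi (to_Tpsi h) X m = h X m.
Proof. by rewrite /= emu1. Qed.

Lemma to_from_Tpsi (M : entcontra E) (N : cdata CC) (k : emor M (Tpsi E N)) X m :
  to_Tpsi (from_Tpsi k) X m = k X m.
Proof. by apply: linmap_ext => a /=; have -> := emapP k m a; rewrite /= mul1r. Qed.

Lemma to_Tpsi_natural (M M' : entcontra E) (N N' : cdata CC)
    (u : emor M' M) (v : cmor N N') (h : cmor M N) X m :
  to_Tpsi (cmor_comp v (cmor_comp h u)) X m = lcomp (v X) (to_Tpsi h X (u X m)).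
Proof. by apply: linmap_ext => a /=; have -> := emapP u m a. Qed.

End Adjunction.

Theorem proposition3p8 (K : fieldType) (Ob : Type) (CC : coalgebra K Ob)
    (A : algType K) (E : entwining CC A) :
  exists (Phi : forall (M : entcontra E) (N : contramodule CC),
                  cmor M N -> emor M (Tpsi E N))
         (Psi : forall (M : entcontra E) (N : contramodule CC),
                  emor M (Tpsi E N) -> cmor M N),
    [/\ (* Psi o Phi = id *)
        (forall (M : entcontra E) (N : contramodule CC) (h : cmor M N) X m, Psi M N (Phi M N h) X m = h X m),
        (* Phi o Psi = id *)
        (forall (M : entcontra E) (N : contramodule CC)
                (k : emor M (Tpsi E N)) X m, Phi M N (Psi M N k) X m = k X m) &
        (* naturality in M and N: Phi(v o h o S_psi u) = T_psi v o Phi h o u *)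
        (forall (M M' : entcontra E) (N N' : contramodule CC)
                (u : emor M' M) (v : cmor N N') (h : cmor M N) X m,
            Phi M' N' (cmor_comp v (cmor_comp h u)) X m
            = lcomp (v X) (Phi M N h X (u X m)))].
Proof.
exists (fun M N h => to_Tpsi h), (fun M N k => from_Tpsi k); split.
- exact: from_to_Tpsi.
- exact: to_from_Tpsi.
- move=> M M' N N' u v h X m; exact: to_Tpsi_natural.
Qed.
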